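(* Let $k$ be a field of characteristic $0$ and let $V\subset\mathbb{P}^n_k$ be a geometrically integral complete intersection of two quadrics $Q_1=Q_2=0$ which is not a cone. If the homogeneous polynomial $P(\lambda,\mu)=\det(\lambda Q_1+\mu Q_2)$ vanishes identically, then $V$ has infinitely many singular $k$-rational points.
   Context: Here $\det(\lambda Q_1+\mu Q_2)$ is the determinant of the symmetric matrix of the quadratic form $\lambda Q_1+\mu Q_2$ in $n+1$ variables. *)

From HB Require Import structures.
From mathcomp Require Import all_boot all_order all_algebra.
From mathcomp Require Import mpoly.
Set Implicit Arguments. Unset Strict Implicit. Unset Printing Implicit Defensive.
Import Order.TTheory GRing.Theory Num.Theory.
Local Open Scope ring_scope.

(* Projective space P^n is modelled by nonzero vectors of R^(n+1) up to scaling;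
   a point of P^n is represented by a function x : 'I_n.+1 -> R, x <> 0. *)

Definition qform (R : comNzRingType) (N : nat) (A : 'M[R]_N) : {mpoly R[N]} :=
  \sum_(i < N) \sum_(j < N) A i j *: ('X_i * 'X_j).

Definition in_ideal2 (R : comNzRingType) (N : nat) (f g p : {mpoly R[N]}) : Prop :=
  exists a b : {mpoly R[N]}, p = a * f + b * g.

(* (f, g) is a regular sequence in R[x]: the standard definition of
   "V(f,g) is a complete intersection". *)
Definition regular_seq2 (R : comNzRingType) (N : nat) (f g : {mpoly R[N]}) : Prop :=
  [/\ ~ in_ideal2 f g 1,
      (forall h, h * f = 0 -> h = 0) &
      (forall h, (exists c, h * g = c * f) -> exists c', h = c' * f)].

(* V = {f = g = 0} is geometrically integral: after base change to any
   algebraically closed extension L of k, the (saturated, since complete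
   intersection) homogeneous ideal (f, g) is prime. *)
Definition geom_integral (k : fieldType) (N : nat) (f g : {mpoly k[N]}) : Prop :=
  forall (L : closedFieldType) (s : {rmorphism k -> L}),
    let fL := map_mpoly s f in let gL := map_mpoly s g in
    ~ in_ideal2 fL gL 1 /\
    forall p q : {mpoly L[N]}, in_ideal2 fL gL (p * q) ->
      in_ideal2 fL gL p \/ in_ideal2 fL gL q.

Definition on_V (L : comNzRingType) (N : nat) (f g : {mpoly L[N]})
    (x : 'I_N -> L) : Prop :=
  x <> (fun _ => 0) /\ f.@[x] = 0 /\ g.@[x] = 0.

Definition is_cone (k : fieldType) (N : nat) (f g : {mpoly k[N]}) : Prop :=
  exists (L : closedFieldType) (s : {rmorphism k -> L}) (p : 'I_N -> L),
    let fL := map_mpoly s f in let gL := map_mpoly s g in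
    on_V fL gL p /\
    forall x, on_V fL gL x -> forall a b : L,
      fL.@[fun i => a * p i + b * x i] = 0 /\
      gL.@[fun i => a * p i + b * x i] = 0.

(* x is a singular point of the complete intersection V(f, g): x in V and the
   Jacobian matrix of (f, g) at x has rank < 2 (Jacobian criterion). *)
Definition singular_pt (k : fieldType) (N : nat) (f g : {mpoly k[N]})
    (x : 'I_N -> k) : Prop :=
  on_V f g x /\
  (\rank (\matrix_(r < 2, j < N)
            (if r == ord0 then (f^`M(j)).@[x] else (g^`M(j)).@[x])) < 2)%N.

Definition proj_eq (k : fieldType) (N : nat) (x y : 'I_N -> k) : Prop :=
  exists c : k, c != 0 /\ forall i, x i = c * y i.

Definition infinitely_many_pts (k : fieldType) (N : nat) (P : ('I_N -> k) -> Prop)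
  : Prop :=
  ~ exists (m : nat) (y : 'I_m -> ('I_N -> k)),
      forall x, P x -> exists j, proj_eq x (y j).

Definition pencil_det (k : fieldType) (N : nat) (A1 A2 : 'M[k]_N) : {mpoly k[2]} :=
  \det (\matrix_(i < N, j < N)
          ('X_(@ord0 1) * (A1 i j)%:MP + 'X_(@ord_max 1) * (A2 i j)%:MP)).

(* Since det (lambda A1 + mu A2) vanishes identically, the pencil A1 + t A2 has
   a nonzero kernel vector w(t) depending polynomially on t.  By symmetry,
   w(s)^T A2 w(t) = 0 for s <> t, hence also for s = t because k is infinite;
   so w(t) lies on both quadrics, and (1, t) annihilates the Jacobian matrix at
   w(t): every nonzero w(t) is a singular point.  If these points were finitely
   many, two parameters s <> t would give proportional vectors, and such a vector
   is killed by A1 + s A2 and A1 + t A2, hence by A1 and A2: it is a vertex of V.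
   Since being a cone is defined over an algebraically closed extension of k, we
   build one as an ultraproduct of the algebraic closures of the finitely
   generated, hence countable, subfields of k. *)

From HB Require Import structures.
From mathcomp Require Import all_boot all_order all_algebra.
From mathcomp Require Import mpoly ring closed_field.
From mathcomp Require Import boolp classical_sets filter.
From Stdlib Require Import ClassicalEpsilon.
Set Implicit Arguments. Unset Strict Implicit. Unset Printing Implicit Defensive.
Import GRing.Theory.
Local Open Scope ring_scope.

Inductive fterm := FVar of nat | FZero | FOne | FAdd of fterm & fterm
  | FOpp of fterm | FMul of fterm & fterm | FInv of fterm.

Fixpoint tree_of_fterm (e : fterm) : GenTree.tree nat :=
  match e with
  | FVar n => GenTree.Leaf n
  | FZero => GenTree.Node 0 [::]
  | FOne => GenTree.Node 1 [::]
  | FAdd a b => GenTree.Node 2 [:: tree_of_fterm a; tree_of_fterm b]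
  | FOpp a => GenTree.Node 3 [:: tree_of_fterm a]
  | FMul a b => GenTree.Node 4 [:: tree_of_fterm a; tree_of_fterm b]
  | FInv a => GenTree.Node 5 [:: tree_of_fterm a]
  end.

Fixpoint fterm_of_tree (t : GenTree.tree nat) : option fterm :=
  match t with
  | GenTree.Leaf n => Some (FVar n)
  | GenTree.Node 0 [::] => Some FZero
  | GenTree.Node 1 [::] => Some FOne
  | GenTree.Node 2 [:: a; b] =>
      obind (fun a => omap (FAdd a) (fterm_of_tree b)) (fterm_of_tree a)
  | GenTree.Node 3 [:: a] => omap FOpp (fterm_of_tree a)
  | GenTree.Node 4 [:: a; b] =>
      obind (fun a => omap (FMul a) (fterm_of_tree b)) (fterm_of_tree a)
  | GenTree.Node 5 [:: a] => omap FInv (fterm_of_tree a)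
  | _ => None
  end.

Lemma tree_of_ftermK : pcancel tree_of_fterm fterm_of_tree.
Proof. by elim=> //= [a -> b ->|a ->|a -> b ->|a ->]. Qed.

HB.instance Definition _ := Countable.copy fterm (pcan_type tree_of_ftermK).

Section GeneratedSubfield.
Variables (k : fieldType) (s : seq k).

Fixpoint fterm_eval (e : fterm) : k :=
  match e with
  | FVar n => s`_n
  | FZero => 0
  | FOne => 1
  | FAdd a b => fterm_eval a + fterm_eval b
  | FOpp a => - fterm_eval a
  | FMul a b => fterm_eval a * fterm_eval b
  | FInv a => (fterm_eval a)^-1
  end.

Definition gen_subfield : pred k := fun x => `[< exists e, fterm_eval e = x >].

Lemma gen_subfieldP x : reflect (exists e, fterm_eval e = x) (x \in gen_subfield).
Proof. exact: asboolP. Qed.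

Lemma gen_subfield_divring_closed : GRing.divring_closed gen_subfield.
Proof.
split; first by apply/gen_subfieldP; exists FOne.
- move=> _ _ /gen_subfieldP[a <-] /gen_subfieldP[b <-].
  by apply/gen_subfieldP; exists (FAdd a (FOpp b)).
- move=> _ _ /gen_subfieldP[a <-] /gen_subfieldP[b <-].
  by apply/gen_subfieldP; exists (FMul a (FInv b)).
Qed.

HB.instance Definition _ :=
  GRing.isDivringClosed.Build k gen_subfield gen_subfield_divring_closed.

Lemma mem_gen_subfield x : x \in s -> x \in gen_subfield.
Proof. by move=> xs; apply/gen_subfieldP; exists (FVar (index x s)); rewrite /= nth_index. Qed.

Definition gen_field := {x : k | x \in gen_subfield}.
HB.instance Definition _ := [isSub of gen_field for (@sval k _)].
HB.instance Definition _ := [Choice of gen_field by <:].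
HB.instance Definition _ := [SubChoice_isSubComUnitRing of gen_field by <:].
HB.instance Definition _ := [SubComUnitRing_isSubIntegralDomain of gen_field by <:].
HB.instance Definition _ := [SubIntegralDomain_isSubField of gen_field by <:].

Lemma gen_field_term (x : gen_field) : exists e, fterm_eval e == val x.
Proof. by have /gen_subfieldP[e <-] := valP x; exists e. Qed.

Definition gen_field_code (x : gen_field) : fterm := xchoose (gen_field_term x).

Lemma gen_field_codeK : pcancel gen_field_code (fun e => insub (fterm_eval e)).
Proof. by move=> x; rewrite (eqP (xchooseP (gen_field_term x))) valK. Qed.

HB.instance Definition _ := PCanIsCountable gen_field_codeK.

End GeneratedSubfield.

Section Ultraproduct.
Local Open Scope classical_set_scope.
Variables (I : Type) (U : set_system I) (U_ultra : UltraFilter U)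
  (C : I -> closedFieldType).

Local Notation prod := (forall i, C i).

Definition ueq (f g : prod) : Prop := U [set i | f i = g i].

Lemma ueq_refl f : ueq f f.
Proof. exact: filterE. Qed.

Lemma ueq_sym f g : ueq f g -> ueq g f.
Proof. by apply: filterS => i /= ->. Qed.

Lemma ueq_trans f g h : ueq f g -> ueq g h -> ueq f h.
Proof. by apply: filterS2 => i /= -> ->. Qed.

Definition ucanon (f : prod) : prod := epsilon (inhabits f) (ueq f).

Lemma ueq_canon f : ueq f (ucanon f).
Proof. by apply: epsilon_spec; exists f; apply: ueq_refl. Qed.

Lemma ucanon_eq f g : ueq f g -> ucanon f = ucanon g.
Proof.
move=> fg; rewrite /ucanon (_ : inhabits f = inhabits g) //.
congr epsilon; apply: funext => h; apply: propext.
by split; [apply: ueq_trans; apply: ueq_sym|apply: ueq_trans].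
Qed.

(* The quotient by [ueq] is realised by the representatives chosen by
   [epsilon], so that its equality is Leibniz equality. *)
Definition ultraprod := {f : prod | ucanon f = f}.
HB.instance Definition _ := gen_eqMixin ultraprod.
HB.instance Definition _ := gen_choiceMixin ultraprod.

Definition upi (f : prod) : ultraprod :=
  exist _ (ucanon f) (ucanon_eq (ueq_sym (ueq_canon f))).

Local Notation uval := (@proj1_sig _ _).

Lemma upiK (x : ultraprod) : upi (uval x) = x.
Proof. by case: x => f e; apply: eq_exist. Qed.

Lemma upi_eq f g : ueq f g -> upi f = upi g.
Proof. by move=> fg; apply: eq_exist; apply: ucanon_eq. Qed.

Lemma eq_upi f g : upi f = upi g -> ueq f g.
Proof.
move=> /(congr1 uval) /= fg; apply: ueq_trans (ueq_canon f) _.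
by rewrite fg; apply: ueq_sym (ueq_canon g).
Qed.

Lemma upi_ext f g : (forall i, f i = g i) -> upi f = upi g.
Proof. by move=> fg; apply: upi_eq; apply: filterE. Qed.

Definition uzero := upi (fun i => 0).
Definition uone := upi (fun i => 1).
Definition uopp (x : ultraprod) := upi (fun i => - uval x i).
Definition uadd (x y : ultraprod) := upi (fun i => uval x i + uval y i).
Definition umul (x y : ultraprod) := upi (fun i => uval x i * uval y i).
Definition uinv (x : ultraprod) := upi (fun i => (uval x i)^-1).

Lemma upi_op1 (op : forall i, C i -> C i) f :
  upi (fun i => op i (uval (upi f) i)) = upi (fun i => op i (f i)).
Proof. by apply: upi_eq; apply: filterS (ueq_sym (ueq_canon f)) => i /= ->. Qed.

Lemma upi_op2 (op : forall i, C i -> C i -> C i) f g :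
  upi (fun i => op i (uval (upi f) i) (uval (upi g) i)) =
  upi (fun i => op i (f i) (g i)).
Proof.
apply: upi_eq; apply: filterS2 (ueq_sym (ueq_canon f)) (ueq_sym (ueq_canon g)).
by move=> i /= -> ->.
Qed.

Lemma uoppE f : uopp (upi f) = upi (fun i => - f i).
Proof. exact: (upi_op1 (fun i x => - x)). Qed.
Lemma uaddE f g : uadd (upi f) (upi g) = upi (fun i => f i + g i).
Proof. exact: (upi_op2 (fun i x y => x + y)). Qed.
Lemma umulE f g : umul (upi f) (upi g) = upi (fun i => f i * g i).
Proof. exact: (upi_op2 (fun i x y => x * y)). Qed.
Lemma uinvE f : uinv (upi f) = upi (fun i => (f i)^-1).
Proof. exact: (upi_op1 (fun i x => x^-1)). Qed.

Ltac ulift :=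
  repeat match goal with x : ultraprod |- _ =>
    let f := fresh "f" in rewrite -[x]upiK; move: (uval x) => {x} f end;
  rewrite /uzero /uone ?(uoppE, uaddE, umulE, uinvE); apply: upi_ext => i.

Lemma uaddA : associative uadd. Proof. by move=> x y z; ulift; rewrite addrA. Qed.
Lemma uaddC : commutative uadd. Proof. by move=> x y; ulift; rewrite addrC. Qed.
Lemma uadd0 : left_id uzero uadd. Proof. by move=> x; ulift; rewrite add0r. Qed.
Lemma uaddN : left_inverse uzero uopp uadd. Proof. by move=> x; ulift; rewrite addNr. Qed.

HB.instance Definition _ := GRing.isZmodule.Build ultraprod uaddA uaddC uadd0 uaddN.

Lemma umulA : associative umul. Proof. by move=> x y z; ulift; rewrite mulrA. Qed.
Lemma umulC : commutative umul. Proof. by move=> x y; ulift; rewrite mulrC. Qed.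
Lemma umul1 : left_id uone umul. Proof. by move=> x; ulift; rewrite mul1r. Qed.
Lemma umulDl : left_distributive umul uadd. Proof. by move=> x y z; ulift; rewrite mulrDl. Qed.

Lemma uone_neq0 : uone != uzero.
Proof.
apply/eqP => /eq_upi /filter_ex[i /eqP] /=.
by rewrite oner_eq0.
Qed.

HB.instance Definition _ := GRing.Zmodule_isComNzRing.Build ultraprod
  umulA umulC umul1 umulDl uone_neq0.

Lemma umulVf (x : ultraprod) : x != 0 -> uinv x * x = 1.
Proof.
rewrite -[x]upiK; move: (uval x) => {x} f nz.
have [f0|/filterS fn0] := in_ultra_setVsetC [set i | f i = 0] U_ultra.
  by case/eqP: nz; apply: upi_eq.
rewrite uinvE [_ * _]umulE; apply: upi_eq; apply: fn0 => i /= /eqP.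
exact: mulVf.
Qed.

Lemma uinv0 : uinv 0 = 0.
Proof. by rewrite -[0]/uzero uinvE; apply: upi_ext => i; rewrite invr0. Qed.

HB.instance Definition _ := GRing.ComNzRing_isField.Build ultraprod umulVf uinv0.

Lemma upiX f n : upi f ^+ n = upi (fun i => f i ^+ n).
Proof.
elim: n => [|n IH]; first by apply: upi_ext => i; rewrite expr0.
by rewrite exprS IH [_ * _]umulE; apply: upi_ext => i; rewrite exprS.
Qed.

Lemma upi_sum n (F : 'I_n -> prod) :
  \sum_(j < n) upi (F j) = upi (fun i => \sum_(j < n) F j i).
Proof.
elim: n F => [|n IH] F; first by rewrite big_ord0; apply: upi_ext => i; rewrite big_ord0.
rewrite big_ord_recr /= IH [_ + _]uaddE; apply: upi_ext => i.
by rewrite big_ord_recr.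
Qed.

Lemma ultraprod_closed : GRing.closed_field_axiom ultraprod.
Proof.
move=> n c n_gt0.
have root i : {x : C i | x ^+ n = \sum_(j < n) uval (c j) i * x ^+ j}.
  exact: cid (solve_monicpoly (fun j => uval (c j) i) n_gt0).
exists (upi (fun i => sval (root i))); rewrite upiX.
under eq_bigr => j _ do rewrite -[c j]upiK upiX [_ * _]umulE.
by rewrite upi_sum; apply: upi_ext => i; rewrite (svalP (root i)).
Qed.

HB.instance Definition _ := Field_isAlgClosed.Build ultraprod ultraprod_closed.

End Ultraproduct.

Section ClosedExtension.
Local Open Scope classical_set_scope.
Variable k : fieldType.

Definition gen_closure (t : seq k) : closedFieldType :=
  tag (countable_algebraic_closure (gen_field t)).

Definition gen_closure_embed (t : seq k) : {rmorphism gen_field t -> gen_closure t} :=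
  sval (tagged (countable_algebraic_closure (gen_field t))).

(* Junk value 0 outside the subfield generated by t. *)
Definition gen_closure_map (t : seq k) (x : k) : gen_closure t :=
  if insub x is Some y then gen_closure_embed t y else 0.

Lemma gen_closure_mapE t x (xt : x \in gen_subfield t) :
  gen_closure_map t x = gen_closure_embed t (Sub x xt).
Proof. by rewrite /gen_closure_map insubT. Qed.

Lemma gen_closure_map0 t : gen_closure_map t 0 = 0.
Proof.
rewrite (gen_closure_mapE (rpred0 _)) -(rmorph0 (gen_closure_embed t)).
by congr (_ _); apply: val_inj.
Qed.

Lemma gen_closure_map1 t : gen_closure_map t 1 = 1.
Proof.
rewrite (gen_closure_mapE (rpred1 _)) -(rmorph1 (gen_closure_embed t)).
by congr (_ _); apply: val_inj.
Qed.

Lemma gen_closure_mapD t :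
  {in gen_subfield t &, {morph gen_closure_map t : x y / x + y}}.
Proof.
move=> x y xt yt; rewrite (gen_closure_mapE xt) (gen_closure_mapE yt).
by rewrite (gen_closure_mapE (rpredD xt yt)) -rmorphD; congr (_ _); apply: val_inj.
Qed.

Lemma gen_closure_mapM t :
  {in gen_subfield t &, {morph gen_closure_map t : x y / x * y}}.
Proof.
move=> x y xt yt; rewrite (gen_closure_mapE xt) (gen_closure_mapE yt).
by rewrite (gen_closure_mapE (rpredM xt yt)) -rmorphM; congr (_ _); apply: val_inj.
Qed.

Definition superseq (s : seq k) : set (seq k) :=
  [set t : seq k | all (fun x => x \in t) s].

Variables (G : set_system (seq k)) (G_ultra : UltraFilter G)
  (G_superseq : forall s, G (superseq s)).

Definition closure_embed (x : k) : ultraprod G gen_closure :=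
  upi G_ultra (fun t => gen_closure_map t x).

Lemma closure_embed0 : closure_embed 0 = 0.
Proof. by apply: upi_ext => t; rewrite gen_closure_map0. Qed.

Lemma closure_embed1 : closure_embed 1 = 1.
Proof. by apply: upi_ext => t; rewrite gen_closure_map1. Qed.

Lemma closure_embedD : {morph closure_embed : x y / x + y}.
Proof.
move=> x y; rewrite [RHS]uaddE; apply: upi_eq.
apply: filterS (G_superseq [:: x; y]) => t.
by case/and3P=> /mem_gen_subfield xt /mem_gen_subfield yt _; apply: gen_closure_mapD.
Qed.

Lemma closure_embedM : {morph closure_embed : x y / x * y}.
Proof.
move=> x y; rewrite [RHS]umulE; apply: upi_eq.
apply: filterS (G_superseq [:: x; y]) => t.
by case/and3P=> /mem_gen_subfield xt /mem_gen_subfield yt _; apply: gen_closure_mapM.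
Qed.

HB.instance Definition _ := GRing.isNmodMorphism.Build k (ultraprod G gen_closure)
  closure_embed (closure_embed0, closure_embedD).
HB.instance Definition _ := GRing.isMonoidMorphism.Build k (ultraprod G gen_closure)
  closure_embed (closure_embed1, closure_embedM).

Definition closure_rmorphism : {rmorphism k -> ultraprod G gen_closure} :=
  closure_embed.

End ClosedExtension.

Lemma closed_field_extension (k : fieldType) :
  exists L : closedFieldType, inhabited {rmorphism k -> L}.
Proof.
pose B := @superseq k.
have B_proper : ProperFilter (filter_from setT B).
  apply: filter_from_proper; last by move=> s _; exists s; apply/allP.
  apply: filter_from_filter; first by exists [::].
  move=> s1 s2 _ _; exists (s1 ++ s2) => // t.
  by rewrite /B /superseq /= all_cat => /andP[].
have [G [G_ultra BG]] := ultraFilterLemma B_proper.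
have G_superseq s : G (B s) by apply: BG; exists s.
by exists (ultraprod G (@gen_closure k)); constructor;
  exact: closure_rmorphism G_superseq.
Qed.

Section BilinearForm.
Variables (R : comNzRingType) (N : nat).
Implicit Types (A : 'M[R]_N) (u v : 'rV[R]_N).

Definition bform A u v : R := (u *m A *m v^T) 0 0.

Lemma bformE A u v :
  bform A u v = \sum_(i < N) \sum_(j < N) A i j * u 0 i * v 0 j.
Proof.
rewrite /bform mxE exchange_big /=; apply: eq_bigr => j _.
by rewrite !mxE mulr_suml; apply: eq_bigr => i _; rewrite [u 0 i * _]mulrC.
Qed.

Lemma bformDl A u u' v : bform A (u + u') v = bform A u v + bform A u' v.
Proof. by rewrite /bform !mulmxDl mxE. Qed.

Lemma bformZl A a u v : bform A (a *: u) v = a * bform A u v.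
Proof. by rewrite /bform -!scalemxAl mxE. Qed.

Lemma bformDm A A' a u v :
  bform (A + a *: A') u v = bform A u v + a * bform A' u v.
Proof. by rewrite /bform mulmxDr -scalemxAr mulmxDl -scalemxAl !mxE. Qed.

Lemma bform_kerl A u v : u *m A = 0 -> bform A u v = 0.
Proof. by move=> uA; rewrite /bform uA mul0mx mxE. Qed.

Lemma bform_sym A u v : A^T = A -> bform A u v = bform A v u.
Proof.
move=> A_sym; rewrite /bform -[u *m A *m v^T]trmxK mxE.
by rewrite !trmx_mul trmxK A_sym mulmxA.
Qed.

Lemma bform_cone A p x a b : A^T = A -> p *m A = 0 ->
  bform A (a *: p + b *: x) (a *: p + b *: x) = b ^+ 2 * bform A x x.
Proof.
move=> A_sym pA; set y := a *: p + b *: x.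
rewrite bformDl !bformZl bform_kerl // (bform_sym _ _ A_sym) /y.
by rewrite bformDl !bformZl bform_kerl // !mulr0 !add0r mulrA -expr2.
Qed.

Lemma qform_meval A x : (qform A).@[x] = bform A (\row_i x i) (\row_i x i).
Proof.
rewrite /qform bformE raddf_sum; apply: eq_bigr => i _.
rewrite raddf_sum; apply: eq_bigr => j _.
by rewrite /= mevalZ mevalM !mevalXU !mxE mulrA.
Qed.

Lemma mderivXU (i j : 'I_N) : ('X_i : {mpoly R[N]})^`M(j) = (i == j)%:R.
Proof.
rewrite mderivX mnm1E; case: eqP => [->|_]; last by rewrite scale0r.
rewrite (_ : (U_(j) - U_(j))%MM = 0%MM) ?mpolyX0 ?scale1r //.
by apply/mnmP => l; rewrite mnmBE mnm0E subnn.
Qed.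

Lemma sum_delta (F : 'I_N -> R) j : \sum_(i < N) (i == j)%:R * F i = F j.
Proof.
by rewrite (bigD1 j) //= eqxx mul1r big1 ?addr0 // => i /negbTE->; rewrite mul0r.
Qed.

Lemma qform_mderiv_meval A x j :
  ((qform A)^`M(j)).@[x] = ((\row_i x i) *m (A + A^T)) 0 j.
Proof.
rewrite /qform (raddf_sum (mderiv j)) raddf_sum.
under eq_bigr => i _.
  rewrite (raddf_sum (mderiv j)) raddf_sum.
  under eq_bigr => l _ do rewrite /= mderivZ mderivM !mderivXU /= mevalZ mevalD
    !mevalM !mevalMn !meval1 !mevalXU.
  over.
rewrite /= mxE.
transitivity (\sum_(i < N) \sum_(l < N) ((i == j)%:R * (A i l * x l)) +
  \sum_(i < N) \sum_(l < N) ((l == j)%:R * (A i l * x i))).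
  rewrite -big_split; apply: eq_bigr => i _; rewrite -big_split.
  by apply: eq_bigr => l _ /=; ring.
rewrite [X in X + _]exchange_big /=.
under eq_bigr => l _ do rewrite sum_delta.
under [X in _ + X]eq_bigr => i _ do rewrite sum_delta.
rewrite -big_split; apply: eq_bigr => i _.
by rewrite !mxE /= addrC mulrDr ![x i * _]mulrC.
Qed.
End BilinearForm.

Lemma map_qform (R S : comNzRingType) (f : {rmorphism R -> S}) N (A : 'M[R]_N) :
  map_mpoly f (qform A) = qform (map_mx f A).
Proof.
rewrite /qform rmorph_sum; apply: eq_bigr => i _.
rewrite rmorph_sum; apply: eq_bigr => j _.
by rewrite /= map_mpolyZ rmorphM /= !map_mpolyX mxE.
Qed.

Lemma row_fun_rV (R : Type) N (v : 'rV[R]_N) : \row_i v 0 i = v.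
Proof. by apply/rowP => i; rewrite mxE. Qed.

Lemma mxrank_lt_row (F : fieldType) m n (M : 'M[F]_(m, n)) (u : 'rV_m) :
  u != 0 -> u *m M = 0 -> (\rank M < m)%N.
Proof.
move=> u_neq0 uM; rewrite ltn_neqAle rank_leq_row andbT.
apply: contra u_neq0 => M_free; apply/eqP/(row_free_inj M_free).
by rewrite uM mul0mx.
Qed.

Section CharZero.
Variables (k : fieldType) (k_pchar0 : [pchar k] =i pred0).

Lemma pchar0_natr_inj : injective (fun n : nat => n%:R : k).
Proof.
move=> i j eq_ij; apply/eqP; wlog le_ij : i j eq_ij / (i <= j)%N.
  by move=> W; case: (leqP i j) => [|/ltnW] ?; [|rewrite eq_sym]; apply: W.
have : (j - i)%:R == 0 :> k by rewrite natrB // eq_ij subrr.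
by rewrite (pcharf0P k).1 // subn_eq0 eqn_leq le_ij.
Qed.

Lemma pchar0_exists_nonroot (p : {poly k}) (r : seq k) : p != 0 ->
  exists2 x, x \notin r & ~~ root p x.
Proof.
move=> p_neq0; pose q := p * \prod_(a <- r) ('X - a%:P).
have q_neq0 : q != 0 by rewrite mulf_neq0 // monic_neq0 // monic_prod_XsubC.
pose nats := [seq i%:R | i <- iota 0 (size q)] : seq k.
have nats_uniq : uniq nats.
  by rewrite map_inj_uniq ?iota_uniq //; apply: pchar0_natr_inj.
have /allPn[x _] : ~~ all (root q) nats.
  apply/negP => /(max_poly_roots q_neq0) /(_ nats_uniq).
  by rewrite size_map size_iota ltnn.
rewrite rootM negb_or root_prod_XsubC => /andP[px xr]; by exists x.
Qed.

Lemma pchar0_injective_nonroots (p : {poly k}) m : p != 0 ->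
  exists t : 'I_m -> k, injective t /\ forall a, ~~ root p (t a).
Proof.
move=> p_neq0.
have [ts [size_ts uniq_ts nonroot_ts]] :
    exists ts : seq k, [/\ size ts = m, uniq ts & all (predC (root p)) ts].
  elim: m => [|m [ts [size_ts uniq_ts nonroot_ts]]]; first by exists [::].
  have [x xts px] := pchar0_exists_nonroot ts p_neq0.
  by exists (x :: ts); rewrite /= size_ts xts uniq_ts px nonroot_ts.
exists (fun a => ts`_a); split => [a b /eqP|a].
  by rewrite nth_uniq ?size_ts // => /eqP/val_inj.
by apply: (allP nonroot_ts); rewrite mem_nth ?size_ts.
Qed.

Lemma pchar0_poly_eq0_except (p : {poly k}) t :
  (forall s, s != t -> root p s) -> p = 0.
Proof.
move=> p_roots; apply/eqP; apply: contraT => /(pchar0_exists_nonroot [:: t]).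
by case=> x; rewrite mem_seq1 => /p_roots ->.
Qed.
End CharZero.

Section Pencil.
Variables (k : fieldType) (N : nat) (A1 A2 : 'M[k]_N).
Hypotheses (A1_sym : A1^T = A1) (A2_sym : A2^T = A2).

Definition pencil (t : k) : 'M[k]_N := A1 + t *: A2.

Lemma pencil_sym t : (pencil t)^T = pencil t.
Proof. by rewrite /pencil linearD linearZ /= A1_sym A2_sym. Qed.

Lemma pencil_det_kernel : pencil_det A1 A2 = 0 ->
  exists2 w : 'rV[{poly k}]_N, w != 0 &
    forall t, map_mx (horner_eval t) w *m pencil t = 0.
Proof.
pose B : 'M[{poly k}]_N := \matrix_(i, j) ((A1 i j)%:P + 'X * (A2 i j)%:P).
pose h : {rmorphism {mpoly k[2]} -> {poly k}} :=
  mmap (@polyC k) (fun i : 'I_2 => if i == ord0 then 1 else 'X).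
move=> /(congr1 h); rewrite rmorph0 /pencil_det -det_map_mx.
set P := map_mx h _; have -> : P = B.
  apply/matrixP => i j; rewrite !mxE /= mmapD !rmorphM /= !mmapC !mmapX !mmap1U /=.
  by rewrite mul1r.
move=> /eqP /det0P[w w_neq0 wB]; exists w => // t.
have -> : pencil t = map_mx (horner_eval t) B.
  apply/matrixP => i j; rewrite !mxE /= horner_evalE.
  by rewrite hornerD hornerM hornerX !hornerC mulrC.
by rewrite -map_mxM wB map_mx0.
Qed.

Lemma pencil_common_kernel s t (z : 'rV[k]_N) : s != t ->
  z *m pencil s = 0 -> z *m pencil t = 0 -> z *m A1 = 0 /\ z *m A2 = 0.
Proof.
move=> st zs zt.
have zA2 : z *m A2 = 0.
  have : z *m pencil s - z *m pencil t = (s - t) *: (z *m A2).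
    by rewrite /pencil !mulmxDr -!scalemxAr opprD addrACA subrr add0r scalerBl.
  rewrite zs zt subrr => /esym/eqP.
  by rewrite scaler_eq0 subr_eq0 (negbTE st) => /eqP.
by split=> //; move: zs; rewrite /pencil mulmxDr -scalemxAr zA2 scaler0 addr0.
Qed.

Lemma pencil_kernel_singular t (v : 'rV[k]_N) :
  v != 0 -> v *m pencil t = 0 -> bform A2 v v = 0 ->
  singular_pt (qform A1) (qform A2) (v 0).
Proof.
move=> v_neq0 vP vA2v; split; last first.
  apply: (mxrank_lt_row (u := \row_r (if r == ord0 then 1 else t))).
    by apply/rV0Pn; exists ord0; rewrite mxE oner_neq0.
  have : v *m (A1 + A1^T) + t *: (v *m (A2 + A2^T)) = 0.
    rewrite scalemxAr -mulmxDr A1_sym A2_sym scalerDr addrACA -/(pencil t).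
    by rewrite mulmxDr vP addr0.
  move=> /rowP vJ; apply/rowP => j.
  rewrite !mxE big_ord_recr big_ord1 /= !mxE /= !qform_mderiv_meval row_fun_rV mul1r.
  by move: (vJ j); rewrite !mxE.
split.
  move=> v0; case/eqP: v_neq0; apply/rowP => i.
  by rewrite mxE; apply: (congr1 (@^~ i) v0).
have := bform_kerl v vP; rewrite bformDm vA2v mulr0 addr0 => vA1v.
by rewrite !qform_meval row_fun_rV vA1v vA2v.
Qed.

Section PolynomialKernel.
Variable w : 'rV[{poly k}]_N.
Hypothesis w_ker : forall t, map_mx (horner_eval t) w *m pencil t = 0.
Local Notation wt t := (map_mx (horner_eval t) w).

Lemma pencil_kernel_polar s t : s != t -> bform A2 (wt s) (wt t) = 0.
Proof.
move=> st.
have ht : bform (pencil t) (wt s) (wt t) = 0.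
  by rewrite bform_sym ?pencil_sym // bform_kerl.
have hs : bform (pencil s) (wt s) (wt t) = 0 by rewrite bform_kerl.
have : (s - t) * bform A2 (wt s) (wt t) = 0.
  by rewrite -[RHS](subrr 0) -{1}hs -ht !bformDm; ring.
by move/eqP; rewrite mulf_eq0 subr_eq0 (negbTE st) => /eqP.
Qed.

Lemma pencil_kernel_isotropic : [pchar k] =i pred0 ->
  forall t, bform A2 (wt t) (wt t) = 0.
Proof.
move=> k_pchar0 t; pose M := A2 *m (wt t)^T.
(* [q] is [s |-> bform A2 (wt s) (wt t)], a polynomial vanishing off [t]. *)
pose q : {poly k} := (w *m map_mx polyC M) 0 0.
have qE s : q.[s] = bform A2 (wt s) (wt t).
  have map_polyC : map_mx (horner_eval s) (map_mx polyC M) = M.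
    by apply/matrixP => i j; rewrite !mxE /= horner_evalE hornerC.
  by rewrite /bform -mulmxA -/M -map_polyC -map_mxM mxE /= horner_evalE.
rewrite -qE (@pchar0_poly_eq0_except _ k_pchar0 q t) ?horner0 // => s st.
by rewrite /root qE pencil_kernel_polar.
Qed.

End PolynomialKernel.

Lemma common_kernel_cone (z : 'rV[k]_N) : z != 0 -> z *m A1 = 0 -> z *m A2 = 0 ->
  is_cone (qform A1) (qform A2).
Proof.
move=> z_neq0 zA1 zA2; have [L [f]] := closed_field_extension k.
exists L, f, (fun i => f (z 0 i)) => /=; rewrite !map_qform.
set zL := map_mx f z.
have zL_ker A : z *m A = 0 -> zL *m map_mx f A = 0.
  by move=> zA; rewrite -map_mxM zA map_mx0.
have map_sym A : A^T = A -> (map_mx f A)^T = map_mx f A by rewrite map_trmx => ->.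
have row_zL : \row_i f (z 0 i) = zL by apply/rowP => i; rewrite !mxE.
split.
  split; last by rewrite !qform_meval row_zL !bform_kerl ?zL_ker.
  move=> zL0; case/eqP: z_neq0; apply/rowP => i; apply: (fmorph_inj f).
  by rewrite !mxE rmorph0; apply: (congr1 (@^~ i) zL0).
move=> x [_ [x1 x2]] a b; rewrite !qform_meval in x1 x2 *.
have -> : \row_i (a * f (z 0 i) + b * x i) = a *: zL + b *: \row_i x i.
  by apply/rowP => i; rewrite !mxE.
by rewrite !bform_cone ?map_sym ?zL_ker // x1 x2 mulr0.
Qed.

Lemma pencil_kernels_proportional_cone s t (u : 'rV[k]_N) c :
  s != t -> u != 0 -> c != 0 ->
  u *m pencil s = 0 -> (c *: u) *m pencil t = 0 -> is_cone (qform A1) (qform A2).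
Proof.
move=> st u_neq0 c_neq0 us /eqP; rewrite -scalemxAl scaler_eq0 (negbTE c_neq0).
move=> /eqP ut; have [uA1 uA2] := pencil_common_kernel st us ut.
exact: common_kernel_cone u_neq0 uA1 uA2.
Qed.

End Pencil.

Lemma proj_eq_common (k : fieldType) N (x y z : 'I_N -> k) :
  proj_eq x z -> proj_eq y z -> exists2 c, c != 0 & forall i, x i = c * y i.
Proof.
move=> [a [a_neq0 xz]] [b [b_neq0 yz]]; exists (a / b).
  by rewrite mulf_neq0 ?invr_eq0.
by move=> i; rewrite xz yz mulrA divfK.
Qed.

Theorem lemma5p9 (k : fieldType) (n : nat) (A1 A2 : 'M[k]_n.+1) :
  [pchar k] =i pred0 ->
  A1^T = A1 -> A2^T = A2 ->
  regular_seq2 (qform A1) (qform A2) ->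
  geom_integral (qform A1) (qform A2) ->
  ~ is_cone (qform A1) (qform A2) ->
  pencil_det A1 A2 = 0 ->
  infinitely_many_pts (singular_pt (qform A1) (qform A2)).
Proof.
move=> k_pchar0 A1_sym A2_sym _ _ not_cone.
move=> /pencil_det_kernel[w /rV0Pn[i0 wi0] w_ker] [m [y cover]].
have [t [t_inj t_nonroot]] := pchar0_injective_nonroots k_pchar0 m.+1 wi0.
pose v a := map_mx (horner_eval (t a)) w.
have v_neq0 a : v a != 0.
  by apply/rV0Pn; exists i0; rewrite mxE horner_evalE; apply: t_nonroot.
have v_sing a : singular_pt (qform A1) (qform A2) (v a 0).
  exact: pencil_kernel_singular (v_neq0 a) (w_ker _)
    (pencil_kernel_isotropic A1_sym A2_sym w_ker k_pchar0 _).
have /fin_all_exists[f f_cover] a : exists j, proj_eq (v a 0) (y j).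
  exact: cover (v_sing a).
have /injectivePn[a [b ab fab]] : ~~ injectiveb f.
  by apply/negP => /injectiveP /leq_card; rewrite !card_ord ltnn.
have fa := f_cover a; rewrite fab in fa.
have [c c_neq0 vba] := proj_eq_common (f_cover b) fa.
have vb : v b = c *: v a by apply/rowP => i; rewrite [RHS]mxE -vba.
have tab : t a != t b by rewrite (inj_eq t_inj).
apply: not_cone (pencil_kernels_proportional_cone A1_sym A2_sym tab (v_neq0 a) c_neq0
  (w_ker _) _).
by rewrite -vb; apply: w_ker.
Qed.
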